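(* Let $\mathcal{Q}$ be either the category of unital involutive quantales with unital involutive homomorphisms or the category of strong involutive quantales with strong involutive homomorphisms, and regard locales as objects of $\mathcal{Q}$. Then any colimit in $\mathcal{Q}$ of a diagram of locales is a strictly two-sided quantale.
   Context: A quantale is a complete lattice with an associative multiplication distributing over arbitrary joins in both variables; $1$ is its top. It is unital if it has a multiplicative unit $e$, strong if $1\cdot 1=1$. An involutive quantale has an involution $^*$ with $a^{**}=a$, $(a\cdot b)^*=b^*\cdot a^*$, $(\bigvee a_i)^*=\bigvee a_i^*$. Homomorphisms preserve joins and multiplication; unital ones preserve the unit, strong ones the top, involutive ones the involution. A locale (frame) is regarded as a unital involutive quantale with multiplication $\wedge$, unit the top and trivial involution; locale homomorphisms are exactly the unital (equivalently strong) quantale homomorphisms between locales. A strictly two-sided quantale is a unital quantale whose unit is its top. *)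

Set Implicit Arguments.

Definition img {A B : Type} (f : A -> B) (S : A -> Prop) : B -> Prop :=
  fun y => exists x, S x /\ y = f x.

Record IQuantale := {
  carrier :> Type;
  le : carrier -> carrier -> Prop;
  sup : (carrier -> Prop) -> carrier;
  mul : carrier -> carrier -> carrier;
  inv : carrier -> carrier;
  le_refl : forall a, le a a;
  le_trans : forall a b c, le a b -> le b c -> le a c;
  le_antisym : forall a b, le a b -> le b a -> a = b;
  sup_ub : forall (S : carrier -> Prop) a, S a -> le a (sup S);
  sup_least : forall (S : carrier -> Prop) b,
      (forall a, S a -> le a b) -> le (sup S) b;
  mul_assoc : forall a b c, mul a (mul b c) = mul (mul a b) c;
  mul_supr : forall a (S : carrier -> Prop),
      mul a (sup S) = sup (img (mul a) S);
  mul_supl : forall (S : carrier -> Prop) b,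
      mul (sup S) b = sup (img (fun x => mul x b) S);
  inv_inv : forall a, inv (inv a) = a;
  inv_mul : forall a b, inv (mul a b) = mul (inv b) (inv a);
  inv_sup : forall (S : carrier -> Prop), inv (sup S) = sup (img inv S)
}.

Arguments le {i} _ _.
Arguments sup {i} _.
Arguments mul {i} _ _.
Arguments inv {i} _.

Definition top (Q : IQuantale) : Q := sup (fun _ : Q => True).

Definition is_unit (Q : IQuantale) (e : Q) : Prop :=
  forall a : Q, mul e a = a /\ mul a e = a.

Definition unital (Q : IQuantale) : Prop := exists e : Q, is_unit Q e.

Definition strong (Q : IQuantale) : Prop := mul (top Q) (top Q) = top Q.

Definition strictly_two_sided (Q : IQuantale) : Prop := is_unit Q (top Q).

Definition is_iqhom (Q Q' : IQuantale) (f : Q -> Q') : Prop :=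
  (forall S : Q -> Prop, f (sup S) = sup (img f S)) /\
  (forall a b : Q, f (mul a b) = mul (f a) (f b)) /\
  (forall a : Q, f (inv a) = inv (f a)).

(** Locales, regarded as unital involutive quantales: multiplication is the
    binary meet (so the unit is the top) and the involution is trivial. *)
Definition is_locale (Q : IQuantale) : Prop :=
  (forall a b : Q, le (mul a b) a /\ le (mul a b) b /\
     forall c : Q, le c a -> le c b -> le c (mul a b)) /\
  (forall a : Q, inv a = a).

Inductive qkind := UnitalInv | StrongInv.

Definition qobj (K : qkind) (Q : IQuantale) : Prop :=
  match K with
  | UnitalInv => unital Q
  | StrongInv => strong Q
  end.

(** Morphisms of the category (units are unique, so "preserves the unit"
    is stated for any units of source and target). *)
Definition qhom (K : qkind) (Q Q' : IQuantale) (f : Q -> Q') : Prop :=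
  is_iqhom Q Q' f /\
  match K with
  | UnitalInv => forall (e : Q) (e' : Q'), is_unit Q e -> is_unit Q' e' -> f e = e'
  | StrongInv => f (top Q) = top Q'
  end.

Record Cat := {
  ob :> Type;
  hom : ob -> ob -> Type;
  cid : forall i, hom i i;
  ccomp : forall i j k, hom j k -> hom i j -> hom i k;
  ccomp_id_l : forall i j (u : hom i j), ccomp (cid j) u = u;
  ccomp_id_r : forall i j (u : hom i j), ccomp u (cid i) = u;
  ccomp_assoc : forall i j k l (u : hom k l) (v : hom j k) (w : hom i j),
      ccomp u (ccomp v w) = ccomp (ccomp u v) w
}.

Arguments hom {c} _ _.
Arguments cid {c} _.
Arguments ccomp {c i j k} _ _.

Record Diagram (K : qkind) (J : Cat) := {
  dob : J -> IQuantale;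
  dmap : forall i j, hom i j -> dob i -> dob j;
  dob_obj : forall i, qobj K (dob i);
  dmap_hom : forall i j (u : hom i j), qhom K (dob i) (dob j) (dmap i j u);
  dmap_id : forall i (x : dob i), dmap i i (cid i) x = x;
  dmap_comp : forall i j k (u : hom j k) (v : hom i j) (x : dob i),
      dmap i k (ccomp u v) x = dmap j k u (dmap i j v x)
}.

Arguments dob {K J} _ _.
Arguments dmap {K J} _ {i j} _ _.

Definition locale_diagram K J (D : Diagram K J) : Prop :=
  forall i, is_locale (dob D i).

Definition cocone K J (D : Diagram K J) (Q : IQuantale)
    (c : forall i, dob D i -> Q) : Prop :=
  qobj K Q /\
  (forall i, qhom K (dob D i) Q (c i)) /\
  (forall i j (u : hom i j) (x : dob D i), c j (dmap D u x) = c i x).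

Definition is_colimit K J (D : Diagram K J) (Q : IQuantale)
    (c : forall i, dob D i -> Q) : Prop :=
  cocone D Q c /\
  forall (Q' : IQuantale) (c' : forall i, dob D i -> Q'),
    cocone D Q' c' ->
    (exists h : Q -> Q', qhom K Q Q' h /\ forall i (x : dob D i), h (c i x) = c' i x) /\
    (forall h1 h2 : Q -> Q',
        qhom K Q Q' h1 -> (forall i (x : dob D i), h1 (c i x) = c' i x) ->
        qhom K Q Q' h2 -> (forall i (x : dob D i), h2 (c i x) = c' i x) ->
        forall y, h1 y = h2 y).

(* A colimit is generated, as an involutive quantale, by the images of its
   cocone legs: any subquantale containing them that is again an object of the
   category, with inclusion and corestricted legs morphisms, must be everything.
   For a diagram of locales each leg sends the top (= unit) of its locale to
   the unit [e] (unital case) or to the top (strong case) of the colimit [Q].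
   In the unital case every leg then lands in the down-set of [e], a unital
   subquantale, so [1 <= e] and [1 = e]; in the strong case every leg lands in
   the subquantale of two-sided elements [1 a = a = a 1], which contains [1],
   so every element is two-sided and [1] is the unit. *)
From Stdlib Require Import ProofIrrelevance Setoid.

Lemma img_comp (A B C : Type) (f : B -> C) (g : A -> B) (S : A -> Prop) (y : C) :
  img f (img g S) y <-> img (fun x => f (g x)) S y.
Proof.
  split.
  - intros [z [[x [Sx ->]] ->]]. exists x. auto.
  - intros [x [Sx ->]]. exists (g x). split; [exists x|]; auto.
Qed.

Lemma sup_ext (Q : IQuantale) (S T : Q -> Prop) :
  (forall x, S x <-> T x) -> sup S = sup T.
Proof.
  intros ST. apply le_antisym; apply sup_least; intros a Ha; apply sup_ub, ST; exact Ha.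
Qed.

Lemma sup_pair_le {Q : IQuantale} {a b : Q} :
  le a b -> sup (fun x => x = a \/ x = b) = b.
Proof.
  intros ab. apply le_antisym.
  - apply sup_least. intros x [-> | ->]; auto using le_refl.
  - apply sup_ub. auto.
Qed.

Lemma sup_preserving_mono {Q Q' : IQuantale} (f : Q -> Q') {a b : Q} :
  (forall S, f (sup S) = sup (img f S)) -> le a b -> le (f a) (f b).
Proof.
  intros fsup ab. rewrite <- (sup_pair_le ab), fsup. apply sup_ub. exists a. auto.
Qed.

Lemma mul_mono_l {Q : IQuantale} {a b : Q} (c : Q) : le a b -> le (mul a c) (mul b c).
Proof. apply (sup_preserving_mono (fun x => mul x c)). intros S. apply mul_supl. Qed.

Lemma inv_mono {Q : IQuantale} {a b : Q} : le a b -> le (inv a) (inv b).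
Proof. apply sup_preserving_mono, inv_sup. Qed.

Lemma iqhom_mono {Q Q' : IQuantale} {f : Q -> Q'} {a b : Q} :
  is_iqhom Q Q' f -> le a b -> le (f a) (f b).
Proof. intros [fsup _]. apply sup_preserving_mono, fsup. Qed.

Lemma le_top {Q : IQuantale} (a : Q) : le a (top Q).
Proof. apply sup_ub. exact I. Qed.

Lemma unit_unique {Q : IQuantale} {e e' : Q} : is_unit Q e -> is_unit Q e' -> e = e'.
Proof. intros He He'. rewrite <- (proj1 (He e')). symmetry. apply He'. Qed.

Lemma inv_unit {Q : IQuantale} {e : Q} : is_unit Q e -> inv e = e.
Proof.
  intros He. apply (unit_unique (Q := Q)); [|exact He].
  intros a. rewrite <- (inv_inv _ a), <- !inv_mul, !inv_inv.
  destruct (He (inv a)) as [-> ->]. split; apply inv_inv.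
Qed.

Lemma inv_top (Q : IQuantale) : inv (top Q) = top Q.
Proof.
  unfold top. rewrite inv_sup. apply sup_ext. intros x; split; [auto|].
  intros _. exists (inv x). rewrite inv_inv. auto.
Qed.

Lemma locale_top_unit {L : IQuantale} : is_locale L -> is_unit L (top L).
Proof.
  intros [meet _] a.
  destruct (meet (top L) a) as [_ [ta_le_a ge_ta]].
  destruct (meet a (top L)) as [at_le_a [_ ge_at]].
  split; apply le_antisym; auto using le_refl, le_top.
Qed.

Lemma qhom_id K (Q : IQuantale) : qhom K Q Q (fun y => y).
Proof.
  split; [split; [|split]|].
  - intros S. apply sup_ext. intros x. split.
    + intros Sx. exists x. auto.
    + intros [y [Sy ->]]. exact Sy.
  - reflexivity.
  - reflexivity.
  - destruct K; [exact (@unit_unique Q) | reflexivity].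
Qed.

Lemma qhom_comp {K} {A B C : IQuantale} {f : A -> B} {g : B -> C} :
  qobj K B -> qhom K A B f -> qhom K B C g -> qhom K A C (fun x => g (f x)).
Proof.
  intros objB [[fsup [fmul finv]] fK] [[gsup [gmul ginv]] gK].
  split; [split; [|split]|].
  - intros S. rewrite fsup, gsup. apply sup_ext. intros y. apply img_comp.
  - intros a b. rewrite fmul, gmul. reflexivity.
  - intros a. rewrite finv, ginv. reflexivity.
  - destruct K; simpl in *.
    + intros e e' He He'. destruct objB as [eB HeB]. rewrite (fK e eB); auto.
    + rewrite fK, gK. reflexivity.
Qed.

Record sub_closed {Q : IQuantale} (P : Q -> Prop) : Prop := {
  sub_closed_sup : forall S : Q -> Prop, (forall x, S x -> P x) -> P (sup S);
  sub_closed_mul : forall a b, P a -> P b -> P (mul a b);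
  sub_closed_inv : forall a, P a -> P (inv a)
}.

Arguments sub_closed_sup {Q P} _ _ _.
Arguments sub_closed_mul {Q P} _ _ _ _ _.
Arguments sub_closed_inv {Q P} _ _ _.

Section Subquantale.

Context {Q : IQuantale} {P : Q -> Prop} (HP : sub_closed P).

Lemma val_inj (a b : {x : Q | P x}) : proj1_sig a = proj1_sig b -> a = b.
Proof. apply eq_sig_hprop. intros x. apply proof_irrelevance. Qed.

Lemma img_val_in (S : {x : Q | P x} -> Prop) (x : Q) :
  img (@proj1_sig _ _) S x -> P x.
Proof. intros [y [_ ->]]. apply proj2_sig. Qed.

Definition sub_iquantale : IQuantale.
Proof.
  refine {| carrier := {x : Q | P x};
            le := fun a b => le (proj1_sig a) (proj1_sig b);
            sup := fun S => exist _ (sup (img (@proj1_sig _ _) S))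
                                    (sub_closed_sup HP _ (img_val_in S));
            mul := fun a b => exist _ (mul (proj1_sig a) (proj1_sig b))
                                 (sub_closed_mul HP _ _ (proj2_sig a) (proj2_sig b));
            inv := fun a => exist _ (inv (proj1_sig a)) (sub_closed_inv HP _ (proj2_sig a)) |}.
  - intros a. apply le_refl.
  - intros a b c. apply le_trans.
  - intros a b ab ba. apply val_inj, le_antisym; assumption.
  - intros S a Sa. apply sup_ub. exists a. auto.
  - intros S b Sb. apply sup_least. intros x [y [Sy ->]]. auto.
  - intros a b c. apply val_inj, mul_assoc.
  - intros a S. apply val_inj; simpl. rewrite mul_supr. apply sup_ext.
    intros y. rewrite !img_comp. reflexivity.
  - intros S b. apply val_inj; simpl. rewrite mul_supl. apply sup_ext.
    intros y. rewrite !img_comp. reflexivity.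
  - intros a. apply val_inj, inv_inv.
  - intros a b. apply val_inj, inv_mul.
  - intros S. apply val_inj; simpl. rewrite inv_sup. apply sup_ext.
    intros y. rewrite !img_comp. reflexivity.
Defined.

Definition corestrict {A : IQuantale} {f : A -> Q} (Pf : forall x, P (f x)) :
  A -> sub_iquantale := fun x => exist P (f x) (Pf x).

Lemma val_iqhom : is_iqhom sub_iquantale Q (@proj1_sig _ _).
Proof. split; [|split]; reflexivity. Qed.

Lemma corestrict_iqhom {A : IQuantale} {f : A -> Q} (Pf : forall x, P (f x)) :
  is_iqhom A Q f -> is_iqhom A sub_iquantale (corestrict Pf).
Proof.
  intros [fsup [fmul finv]]. split; [|split].
  - intros S. apply val_inj; simpl. rewrite fsup. apply sup_ext.
    intros y. rewrite img_comp. reflexivity.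
  - intros a b. apply val_inj, fmul.
  - intros a. apply val_inj, finv.
Qed.

Lemma val_top_sub : P (top Q) -> proj1_sig (top sub_iquantale) = top Q.
Proof.
  intros Ptop. apply le_antisym; [apply le_top|].
  apply sup_ub. exists (exist P (top Q) Ptop). split; [exact I | reflexivity].
Qed.

Definition qsub (K : qkind) : Prop :=
  qobj K sub_iquantale /\
  qhom K sub_iquantale Q (@proj1_sig _ _) /\
  forall (A : IQuantale) (f : A -> Q) (Pf : forall x, P (f x)),
    qhom K A Q f -> qhom K A sub_iquantale (corestrict Pf).

Lemma qsub_unital {e : Q} : is_unit Q e -> P e -> qsub UnitalInv.
Proof.
  intros He Pe.
  assert (HeS : is_unit sub_iquantale (exist P e Pe)).
  { intros a. split; apply val_inj, He. }
  split; [|split].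
  - exists (exist P e Pe). exact HeS.
  - split; [exact val_iqhom|]. intros u e' Hu He'.
    rewrite <- (unit_unique HeS Hu). apply unit_unique; assumption.
  - intros A f Pf [fhom fK]. split; [exact (corestrict_iqhom Pf fhom)|].
    intros a u Ha Hu. rewrite <- (unit_unique HeS Hu). apply val_inj. exact (fK a e Ha He).
Qed.

Lemma qsub_strong : strong Q -> P (top Q) -> qsub StrongInv.
Proof.
  intros Qstrong Ptop. pose proof (val_top_sub Ptop) as val_top.
  split; [|split].
  - apply val_inj. change (mul (proj1_sig (top sub_iquantale)) (proj1_sig (top sub_iquantale))
                           = proj1_sig (top sub_iquantale)).
    rewrite val_top. exact Qstrong.
  - split; [exact val_iqhom | exact val_top].
  - intros A f Pf [fhom fK]. split; [exact (corestrict_iqhom Pf fhom)|].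
    apply val_inj. change (f (top A) = proj1_sig (top sub_iquantale)).
    rewrite val_top. exact fK.
Qed.

Lemma colimit_qsub_full {K} {J : Cat} {D : Diagram K J} {c : forall i, dob D i -> Q} :
  is_colimit D Q c -> qsub K -> (forall i x, P (c i x)) -> forall y, P y.
Proof.
  intros [cocone_c univ] [objS [valK coreK]] Pc y.
  pose (cS i := corestrict (Pc i)).
  assert (cocone_cS : cocone D sub_iquantale cS).
  { destruct cocone_c as [_ [legs compat]]. split; [exact objS|split].
    - intros i. apply coreK, legs.
    - intros i j u x. apply val_inj, compat. }
  destruct (univ _ _ cocone_cS) as [[h [hK hc]] _].
  destruct (univ Q c cocone_c) as [_ unique].
  rewrite <- (unique (fun y => proj1_sig (h y)) (fun y => y)
                (qhom_comp objS hK valK) (fun i x => f_equal (@proj1_sig _ _) (hc i x))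
                (qhom_id K Q) (fun i x => eq_refl) y).
  apply proj2_sig.
Qed.

End Subquantale.

Lemma down_unit_sub_closed {Q : IQuantale} {e : Q} :
  is_unit Q e -> sub_closed (fun x : Q => le x e).
Proof.
  intros He. split.
  - intros S. apply sup_least.
  - intros a b ae be. apply le_trans with (mul e b); [apply mul_mono_l, ae|].
    destruct (He b) as [-> _]. exact be.
  - intros a ae. rewrite <- (inv_unit He). apply inv_mono, ae.
Qed.

Definition two_sided (Q : IQuantale) (a : Q) : Prop :=
  mul (top Q) a = a /\ mul a (top Q) = a.

Lemma two_sided_sub_closed (Q : IQuantale) : sub_closed (two_sided Q).
Proof.
  split.
  - intros S H. split; [rewrite mul_supr | rewrite mul_supl]; apply sup_ext;
      intros x; split.
    + intros [y [Sy ->]]. rewrite (proj1 (H y Sy)). exact Sy.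
    + intros Sx. exists x. split; [exact Sx|]. symmetry. apply (H x Sx).
    + intros [y [Sy ->]]. rewrite (proj2 (H y Sy)). exact Sy.
    + intros Sx. exists x. split; [exact Sx|]. symmetry. apply (H x Sx).
  - intros a b [ta _] [_ bt]. split.
    + rewrite mul_assoc, ta. reflexivity.
    + rewrite <- mul_assoc, bt. reflexivity.
  - intros a [ta at_]. split; rewrite <- (inv_top Q), <- inv_mul.
    + rewrite at_. reflexivity.
    + rewrite ta. reflexivity.
Qed.

Lemma locale_unital_hom_le_unit {L Q : IQuantale} {f : L -> Q} {e : Q} :
  is_locale L -> is_unit Q e -> qhom UnitalInv L Q f -> forall x, le (f x) e.
Proof.
  intros HL He [fhom fK] x.
  rewrite <- (fK (top L) e (locale_top_unit HL) He).
  apply iqhom_mono, le_top. exact fhom.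
Qed.

Lemma locale_strong_hom_two_sided {L Q : IQuantale} {f : L -> Q} :
  is_locale L -> qhom StrongInv L Q f -> forall x, two_sided Q (f x).
Proof.
  intros HL [[_ [fmul _]] ftop] x. simpl in ftop.
  destruct (locale_top_unit HL x) as [tx xt].
  split; rewrite <- ftop, <- fmul; [rewrite tx | rewrite xt]; reflexivity.
Qed.

Theorem corollary4p2 (K : qkind) (J : Cat) (D : Diagram K J)
    (Q : IQuantale) (c : forall i, dob D i -> Q) :
  locale_diagram D -> is_colimit D Q c -> strictly_two_sided Q.
Proof.
  intros HL Hcol. pose proof Hcol as [[objQ [legs _]] _].
  destruct K.
  - destruct objQ as [e He].
    pose proof (down_unit_sub_closed He) as Hdown.
    assert (below_e : forall y, le y e).
    { apply (colimit_qsub_full Hdown Hcol).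
      - apply (qsub_unital Hdown He), le_refl.
      - intros i. exact (locale_unital_hom_le_unit (HL i) He (legs i)). }
    assert (top_e : top Q = e) by (apply le_antisym; [apply sup_least|apply le_top]; auto).
    unfold strictly_two_sided. rewrite top_e. exact He.
  - pose proof (two_sided_sub_closed Q) as Htwo.
    intros a. apply (colimit_qsub_full Htwo Hcol).
    + apply (qsub_strong Htwo objQ). split; exact objQ.
    + intros i. exact (locale_strong_hom_two_sided (HL i) (legs i)).
Qed.
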